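(* Let $A=(-1,0)$ and $B=(1,0)$. For $x$ on the origin-centered circle of radius $r>1$, let $P^2(x)$ be defined by two steps. First, $y$ is the second intersection point of the line $xA$ with this circle. Then $P^2(x)$ is the second intersection point of the line $yB$ with this circle. Let $Y$ be the vector field on $\mathbb{R}^2\setminus\{0\}$ given in polar coordinates $(\alpha,r)$ by $$Y=-\frac{4\sin\alpha}{r}\,\frac{\partial}{\partial\alpha}.$$ Then, uniformly in $x$ with $|x|=r$, as $r\to\infty$, $$|P^2(x)-x-Y(x)|=O\Big(\frac{1}{r}\Big).$$
   Context: The vector $\partial/\partial\alpha$ at a point at distance $r$ from the origin has Euclidean length $r$. Hence $Y$ is tangent to origin-centered circles and has length $4|\sin\alpha|$. $O(1/r)$ as $r\to\infty$ means bounded in absolute value by $C/r$ for all $r\ge R$, for some constants $C$ and $R$. *)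

From Stdlib Require Import Reals.
Open Scope R_scope.

Definition pt := (R * R)%type.

Definition padd (p q : pt) : pt := (fst p + fst q, snd p + snd q).
Definition psub (p q : pt) : pt := (fst p - fst q, snd p - snd q).
Definition pscale (c : R) (p : pt) : pt := (c * fst p, c * snd p).
Definition pnorm (p : pt) : R := sqrt (fst p ^ 2 + snd p ^ 2).

Definition ptA : pt := (-1, 0).
Definition ptB : pt := (1, 0).

Definition on_circle (r : R) (q : pt) : Prop := pnorm q = r.

Definition second_intersection (r : R) (p Q q : pt) : Prop :=
  on_circle r q /\ (exists t : R, q = padd p (pscale t (psub Q p))) /\ q <> p.

Definition P2_rel (r : R) (x z : pt) : Prop :=
  exists y : pt, second_intersection r x ptA y /\ second_intersection r y ptB z.

(* The polar coordinate vector d/d alpha at x = (|x| cos a, |x| sin a) is (-x2, x1). *)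
Definition d_alpha (x : pt) : pt := (- snd x, fst x).
Definition sin_alpha (x : pt) : R := snd x / pnorm x.
Definition Yfield (x : pt) : pt :=
  pscale (- (4 * sin_alpha x / pnorm x)) (d_alpha x).

From Stdlib Require Import Reals Lra.
Open Scope R_scope.

(* Both steps of [P^2] are explicit: the second intersection of a chord is found linearly
   from [|q|^2 = |p|^2], so [P^2(x)] is a rational function of [x] with a denominator [N]
   of degree 4 in [r].  The coordinates of [N r^2 (P^2(x) - x - Y(x))] are polynomials of
   size [O(r^5)] on the circle, while [N >= r^4 / 16] for [r >= 2]. *)

Definition dot (p q : pt) : R := fst p * fst q + snd p * snd q.

Lemma pnorm_sq (p : pt) : pnorm p ^ 2 = dot p p.
Proof.
  unfold pnorm, dot. rewrite pow2_sqrt; [ring | nra].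
Qed.

Lemma on_circle_dot (r : R) (p : pt) : on_circle r p -> dot p p = r ^ 2.
Proof. intros hp. rewrite <- pnorm_sq, hp. reflexivity. Qed.

Lemma pnorm_le_Rabs (p : pt) : pnorm p <= Rabs (fst p) + Rabs (snd p).
Proof.
  unfold pnorm. rewrite <- (sqrt_pow2 (Rabs (fst p) + Rabs (snd p)))
    by (apply Rplus_le_le_0_compat; apply Rabs_pos).
  apply sqrt_le_1_alt.
  rewrite <- (pow2_abs (fst p)), <- (pow2_abs (snd p)).
  assert (0 <= Rabs (fst p) * Rabs (snd p)) by (apply Rmult_le_pos; apply Rabs_pos).
  nra.
Qed.

Lemma Rabs_le_of_mul_eq (e d m a : R) : 0 < d -> e * d = m -> Rabs m <= a * d -> Rabs e <= a.
Proof.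
  intros hd hm hma. rewrite <- hm, Rabs_mult, (Rabs_right d) in hma by lra.
  exact (Rmult_le_reg_r d _ _ hd hma).
Qed.

Lemma on_circle_Rabs_coords (r : R) (x : pt) :
  0 < r -> on_circle r x -> Rabs (fst x) <= r /\ Rabs (snd x) <= r.
Proof.
  intros hr hx. pose proof (on_circle_dot r x hx) as hcirc. unfold dot in hcirc.
  split; apply Rabs_le; split; nra.
Qed.

(* Writing [q = p + t (Q - p)], the circle equation reads [t (t |Q - p|^2 - 2 p.(p - Q)) = 0],
   and [t <> 0] since [q <> p]. *)
Lemma second_intersection_chord (r : R) (p Q q : pt) :
  on_circle r p -> second_intersection r p Q q ->
  pscale (dot (psub Q p) (psub Q p)) q =
  padd (pscale (dot (psub Q p) (psub Q p)) p) (pscale (2 * dot p (psub p Q)) (psub Q p)).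
Proof.
  intros hp [hq [[t ->] hqp]].
  assert (ht : t <> 0).
  { intros ->. apply hqp. destruct p as [p1 p2], Q as [Q1 Q2].
    unfold padd, pscale. simpl. f_equal; ring. }
  assert (hcirc : dot (padd p (pscale t (psub Q p))) (padd p (pscale t (psub Q p))) = dot p p).
  { rewrite (on_circle_dot r p hp). exact (on_circle_dot r _ hq). }
  destruct p as [p1 p2], Q as [Q1 Q2].
  unfold dot, padd, pscale, psub in *; simpl in *.
  set (D := (Q1 - p1) * (Q1 - p1) + (Q2 - p2) * (Q2 - p2)) in *.
  set (k := p1 * (p1 - Q1) + p2 * (p2 - Q2)) in *.
  assert (htD : t * D = 2 * k).
  { assert (E : t * (t * D - 2 * k) = 0) by (unfold D, k; lra).
    apply Rmult_integral in E as [E | E]; [contradiction | lra]. }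
  f_equal; rewrite <- htD; ring.
Qed.

Lemma second_intersection_axis (r c : R) (p q : pt) :
  on_circle r p -> second_intersection r p (c, 0) q ->
  (r ^ 2 - 2 * c * fst p + c ^ 2) * fst q = 2 * c * r ^ 2 - (r ^ 2 + c ^ 2) * fst p /\
  (r ^ 2 - 2 * c * fst p + c ^ 2) * snd q = (c ^ 2 - r ^ 2) * snd p.
Proof.
  intros hp hq.
  pose proof (second_intersection_chord r p (c, 0) q hp hq) as H.
  pose proof (on_circle_dot r p hp) as hcirc.
  destruct p as [p1 p2], q as [q1 q2].
  unfold dot, padd, pscale, psub in *; simpl in *.
  injection H as H1 H2.
  rewrite <- hcirc. split; lra.
Qed.

(* [N = (r^2 + 2 x1 + 1)(r^2 - 2 y1 + 1)], the product of the two chord denominators. *)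
Definition P2_denom (r x1 : R) : R := (r ^ 2 + 1) ^ 2 + 4 * x1 * (r ^ 2 + 1) + 4 * r ^ 2.

Lemma P2_rel_coords (r : R) (x z : pt) :
  on_circle r x -> P2_rel r x z ->
  P2_denom r (fst x) * fst z = fst x * (r ^ 2 + 1) ^ 2 + 4 * r ^ 2 * (r ^ 2 + 1 + fst x) /\
  P2_denom r (fst x) * snd z = snd x * (r ^ 2 - 1) ^ 2.
Proof.
  intros hx [y [hy hz]].
  pose proof (second_intersection_axis r (-1) x y hx hy) as [hy1 hy2].
  pose proof (second_intersection_axis r 1 y z (proj1 hy) hz) as [hz1 hz2].
  destruct x as [x1 x2], y as [y1 y2], z as [z1 z2]; cbn [fst snd] in *.
  set (Dx := r ^ 2 - 2 * -1 * x1 + (-1) ^ 2) in *.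
  set (Dy := r ^ 2 - 2 * 1 * y1 + 1 ^ 2) in *.
  assert (hN : P2_denom r x1 = Dx * Dy).
  { replace (Dx * Dy) with (Dx * (r ^ 2 + 1) - 2 * (Dx * y1)) by (unfold Dy; ring).
    rewrite hy1. unfold P2_denom, Dx. ring. }
  rewrite hN. split.
  - replace (Dx * Dy * z1) with (Dx * (Dy * z1)) by ring.
    rewrite hz1.
    replace (Dx * (2 * 1 * r ^ 2 - (r ^ 2 + 1 ^ 2) * y1))
      with (2 * r ^ 2 * Dx - (r ^ 2 + 1) * (Dx * y1)) by ring.
    rewrite hy1. unfold Dx. ring.
  - replace (Dx * Dy * z2) with (Dx * (Dy * z2)) by ring.
    rewrite hz2.
    replace (Dx * ((1 ^ 2 - r ^ 2) * y2)) with ((1 - r ^ 2) * (Dx * y2)) by ring.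
    rewrite hy2. ring.
Qed.

(* [N = (r - 1)^4 + 4 (r^2 + 1)(x1 + r)]. *)
Lemma P2_denom_lower_bound (r x1 : R) :
  2 <= r -> - r <= x1 -> r ^ 4 <= 16 * P2_denom r x1.
Proof.
  intros hr hx1.
  assert (hN : P2_denom r x1 = (r - 1) ^ 4 + 4 * (r ^ 2 + 1) * (x1 + r))
    by (unfold P2_denom; ring).
  assert (0 <= 4 * (r ^ 2 + 1) * (x1 + r)) by (apply Rmult_le_pos; nra).
  assert (hr1 : r ^ 2 <= (2 * (r - 1)) ^ 2) by nra.
  assert (r ^ 4 <= (2 * (r - 1)) ^ 4) by nra.
  rewrite hN. nra.
Qed.

Definition P2_error_factor (r x1 : R) : R := 5 * r ^ 2 + 1 + 4 * x1 * (r ^ 2 + 1).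

Lemma P2_error_coords (r : R) (x z : pt) :
  0 < r -> on_circle r x -> P2_rel r x z ->
  let e := psub (psub z x) (Yfield x) in
  let u := P2_error_factor r (fst x) in
  fst e * (P2_denom r (fst x) * r ^ 2) = - 4 * snd x ^ 2 * u /\
  snd e * (P2_denom r (fst x) * r ^ 2) = snd x * (4 * fst x * u - 8 * r ^ 4).
Proof.
  intros hr hx hz e u.
  pose proof (P2_rel_coords r x z hx hz) as [hz1 hz2].
  pose proof (on_circle_dot r x hx) as hcirc.
  unfold e, u, Yfield, sin_alpha. rewrite hx.
  destruct x as [x1 x2], z as [z1 z2].
  unfold dot, psub, pscale, d_alpha in *; cbn [fst snd] in *.
  set (N := P2_denom r x1) in *.
  split.
  - replace ((z1 - x1 - - (4 * (x2 / r) / r) * - x2) * (N * r ^ 2))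
      with ((N * z1) * r ^ 2 - x1 * N * r ^ 2 - 4 * x2 ^ 2 * N) by (field; lra).
    rewrite hz1. unfold N, P2_denom, P2_error_factor.
    replace (x2 ^ 2) with (r ^ 2 - x1 * x1) by (rewrite <- hcirc; ring). ring.
  - replace ((z2 - x2 - - (4 * (x2 / r) / r) * x1) * (N * r ^ 2))
      with ((N * z2) * r ^ 2 - x2 * N * r ^ 2 + 4 * x1 * x2 * N) by (field; lra).
    rewrite hz2. unfold N, P2_denom, P2_error_factor. ring.
Qed.

Lemma P2_error_factor_bound (r x1 : R) :
  2 <= r -> Rabs x1 <= r -> Rabs (P2_error_factor r x1) <= 8 * r ^ 3.
Proof.
  intros hr hx1. unfold P2_error_factor.
  assert (Rabs (4 * x1 * (r ^ 2 + 1)) <= 4 * r * (r ^ 2 + 1)).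
  { rewrite !Rabs_mult, (Rabs_right 4), (Rabs_right (r ^ 2 + 1)) by nra.
    apply Rmult_le_compat_r; nra. }
  eapply Rle_trans; [apply Rabs_triang |].
  rewrite Rabs_right by nra. nra.
Qed.


Lemma P2_error_numerators_bound (r x1 x2 : R) :
  2 <= r -> Rabs x1 <= r -> Rabs x2 <= r ->
  let u := P2_error_factor r x1 in
  Rabs (- 4 * x2 ^ 2 * u) <= 40 * r ^ 5 /\ Rabs (x2 * (4 * x1 * u - 8 * r ^ 4)) <= 40 * r ^ 5.
Proof.
  intros hr hx1 hx2 u.
  assert (hu : Rabs u <= 8 * r ^ 3) by (apply P2_error_factor_bound; lra).
  assert (0 <= Rabs x1) by apply Rabs_pos.
  assert (0 <= Rabs x2) by apply Rabs_pos.
  assert (0 <= Rabs u) by apply Rabs_pos.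
  split.
  - rewrite !Rabs_mult, <- RPow_abs, (Rabs_left (-4)) by lra.
    assert (Rabs x2 ^ 2 <= r ^ 2) by (apply pow_incr; lra).
    assert (0 <= Rabs x2 ^ 2) by (apply pow_le; lra).
    nra.
  - assert (hv : Rabs (4 * x1 * u - 8 * r ^ 4) <= 40 * r ^ 4).
    { unfold Rminus. eapply Rle_trans; [apply Rabs_triang |].
      rewrite Rabs_Ropp, !Rabs_mult, (Rabs_right 4), (Rabs_right 8), <- RPow_abs,
        (Rabs_right r) by lra.
      nra. }
    rewrite Rabs_mult. nra.
Qed.

Lemma P2_error_coord_bound (r x1 c m : R) :
  2 <= r -> Rabs x1 <= r -> c * (P2_denom r x1 * r ^ 2) = m -> Rabs m <= 40 * r ^ 5 ->
  Rabs c <= 640 / r.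
Proof.
  intros hr hx1 hc hm.
  assert (hN : r ^ 4 <= 16 * P2_denom r x1).
  { pose proof (Rle_abs (- x1)) as h. rewrite Rabs_Ropp in h.
    apply P2_denom_lower_bound; lra. }
  assert (hr4 : 0 < r ^ 4) by (apply pow_lt; lra).
  assert (hNr : 0 < P2_denom r x1 * r ^ 2) by (apply Rmult_lt_0_compat; [lra | apply pow_lt; lra]).
  apply (Rabs_le_of_mul_eq _ _ _ _ hNr hc), (Rle_trans _ _ _ hm).
  replace (640 / r * (P2_denom r x1 * r ^ 2)) with (40 * r * (16 * P2_denom r x1))
    by (field; lra).
  replace (40 * r ^ 5) with (40 * r * r ^ 4) by ring.
  apply Rmult_le_compat_l; lra.
Qed.

Theorem corollary4p12 :
  exists C R0 : R,
    forall r : R, 1 < r -> R0 <= r ->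
    forall x z : pt, on_circle r x -> P2_rel r x z ->
      pnorm (psub (psub z x) (Yfield x)) <= C / r.
Proof.
  exists 1280, 2.
  intros r _ hr x z hx hz.
  pose proof (P2_error_coords r x z ltac:(lra) hx hz) as [he1 he2].
  pose proof (on_circle_Rabs_coords r x ltac:(lra) hx) as [hx1 hx2].
  pose proof (P2_error_numerators_bound r (fst x) (snd x) hr hx1 hx2) as [hm1 hm2].
  pose proof (P2_error_coord_bound r (fst x) _ _ hr hx1 he1 hm1) as he1'.
  pose proof (P2_error_coord_bound r (fst x) _ _ hr hx1 he2 hm2) as he2'.
  eapply Rle_trans; [apply pnorm_le_Rabs | lra].
Qed.
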